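(* Let $0<\varepsilon<1$. For $n,k\in\mathbb N$ with $k$ even and $k<n$, define $K_i=\{\frac{i-1}2k,\dots,\frac i2k-1\}$ for $i=1,\dots,\lceil 2n/k\rceil-1$ and $K_{\lceil2n/k\rceil}=\{\frac{\lceil2n/k\rceil-1}{2}k,\dots,n-1\}$; for $S\subset n^*=\{0,\dots,n-1\}$ let $B(S)=\operatorname{card}\{i:S\cap K_i\neq\emptyset\}$, and let $\mathcal B(n,k,\varepsilon)=\{S\subset n^*:B(S)\le(2n/k)(1-\varepsilon)\}$. Then there exists an even $k\in\mathbb N$ such that $\lim_{n\to\infty}\operatorname{card}(\mathcal B(n,k,\varepsilon))/2^n=0$. *)

From HB Require Import structures.
From mathcomp Require Import all_boot all_order all_algebra.
From mathcomp Require Import all_classical all_reals all_analysis.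
Set Implicit Arguments. Unset Strict Implicit. Unset Printing Implicit Defensive.
Import Order.TTheory GRing.Theory Num.Theory.
Local Open Scope ring_scope.

Definition nblocks (n k : nat) : nat := ((2 * n + k - 1) %/ k)%N.

(* K_i for 1 <= i <= nblocks n k, as a subset of n^* = 'I_n.
   K_i = {(i-1)k/2, ..., ik/2 - 1} for i < nblocks,
   K_last = {(nblocks-1)k/2, ..., n-1}. (k even, so k/2 = k./2) *)
Definition Kblock (n k i : nat) : {set 'I_n} :=
  if (i < nblocks n k)%N then
    [set j : 'I_n | ((i.-1 * k./2 <= j) && (j < i * k./2))%N]
  else [set j : 'I_n | ((nblocks n k).-1 * k./2 <= j)%N].

Definition Bcount (n k : nat) (S : {set 'I_n}) : nat :=
  #|[set i : 'I_(nblocks n k).+1 | (0 < i)%N && (S :&: Kblock n k i != finset.set0)]|.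

Definition Bfam (R : realType) (n k : nat) (eps : R) : {set {set 'I_n}} :=
  [set S : {set 'I_n} |
     (Bcount k S)%:R <= (2 * n)%:R / k%:R * (1 - eps)].

From HB Require Import structures.
From mathcomp Require Import all_boot all_order all_algebra.
From mathcomp Require Import all_classical all_reals all_analysis.
From mathcomp Require Import zify ring lra.
Import Order.TTheory GRing.Theory Num.Theory.
Import numFieldNormedType.Exports.
Set Implicit Arguments.
Unset Strict Implicit.
Unset Printing Implicit Defensive.

Local Open Scope ring_scope.

(* Take k = 2h, so that there are m = ceil(n/h) blocks, each of size h (the
   last one at most h).  A set S is contained in the union of the blocks it
   meets, so the sets with a prescribed set T of met blocks number at most
   2^(h|T|).  For S in B(n,2h,eps) we have h|T| <= (1-eps) n, and once
   eps h >= 2 this is at most n - 2(m-1).  Summing over the 2^(m+1) choices of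
   T gives card B(n,2h,eps) <= 8 * 2^n / 2^m <= 8h * 2^n / n. *)

Lemma card_setsT (T : finType) : #|{set T}| = (2 ^ #|T|)%N.
Proof. by have := card_powerset [set: T]; rewrite powersetT !cardsT. Qed.

Section Blocks.

Variables (n h : nat).
Hypothesis h_gt0 : (0 < h)%N.

Local Notation m := (nblocks n h.*2).

Lemma leq_nblocks_double : (n <= m * h)%N.
Proof. rewrite /nblocks; lia. Qed.

Lemma nblocks_double_pred : (m.-1 * h <= n)%N.
Proof. rewrite /nblocks; lia. Qed.

Lemma ltn_block_index (j : 'I_n) : (j %/ h < m)%N.
Proof.
by rewrite ltn_divLR //; apply: leq_trans (ltn_ord j) leq_nblocks_double.
Qed.

Definition block_of (j : 'I_n) : 'I_m.+1 := inord (j %/ h).+1.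

Lemma block_ofE (j : 'I_n) : block_of j = (j %/ h).+1 :> nat.
Proof. by rewrite inordK // ltnS ltn_block_index. Qed.

Lemma mem_Kblock_block_of (j : 'I_n) : j \in Kblock n h.*2 (block_of j).
Proof.
have := divn_eq j h; have := ltn_pmod j h_gt0; have := ltn_block_index j.
by rewrite /Kblock block_ofE doubleK; case: ifP; rewrite inE /=; nia.
Qed.

Lemma block_of_inj (i j : 'I_n) :
  block_of i = block_of j -> (i %% h = j %% h)%N -> i = j.
Proof.
move=> /(congr1 (@nat_of_ord _)); rewrite !block_ofE => -[eq_div] eq_mod.
by apply: val_inj; rewrite /= (divn_eq i h) (divn_eq j h) eq_div eq_mod.
Qed.

Definition met_blocks (S : {set 'I_n}) : {set 'I_m.+1} :=
  [set i : 'I_m.+1 | (0 < i)%N && (S :&: Kblock n h.*2 i != finset.set0)].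

Lemma card_met_blocks (S : {set 'I_n}) : #|met_blocks S| = Bcount h.*2 S.
Proof. by []. Qed.

Definition block_cover (T : {set 'I_m.+1}) : {set 'I_n} :=
  [set j : 'I_n | block_of j \in T].

Lemma sub_block_cover_met (S : {set 'I_n}) : S \subset block_cover (met_blocks S).
Proof.
apply/fintype.subsetP => j jS; rewrite !inE; apply/andP; split.
  by rewrite block_ofE.
by apply/set0Pn; exists j; rewrite inE jS mem_Kblock_block_of.
Qed.

Lemma card_block_cover (T : {set 'I_m.+1}) : (#|block_cover T| <= h * #|T|)%N.
Proof.
pose code (j : 'I_n) := (block_of j, Ordinal (ltn_pmod j h_gt0)).
have code_inj : injective code by move=> i j [/block_of_inj]; apply.
have -> : (h * #|T| = #|finset.setX T [set: 'I_h]|)%N.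
  by rewrite cardsX cardsT card_ord mulnC.
rewrite -(card_imset _ code_inj).
apply/subset_leq_card/fintype.subsetP => _ /imsetP[j + ->].
by rewrite !inE => ->.
Qed.

Lemma card_met_blocks_eq (T : {set 'I_m.+1}) :
  (#|[set S | met_blocks S == T]| <= 2 ^ (h * #|T|))%N.
Proof.
apply: leq_trans (leq_pexp2l _ (card_block_cover T)) => //.
rewrite -card_powerset; apply/subset_leq_card/fintype.subsetP => S.
by rewrite !inE => /eqP <-; apply: sub_block_cover_met.
Qed.

Lemma card_subsets_met_small (c : nat) :
  (#|[set S | (h * #|met_blocks S| <= c)%N]| <= 2 ^ m.+1 * 2 ^ c)%N.
Proof.
rewrite -sum1_card (partition_big met_blocks (fun T => h * #|T| <= c)%N) /=;
  last by move=> S; rewrite inE.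
apply: (@leq_trans (\sum_(T : {set 'I_m.+1}) 2 ^ c)); last first.
  by rewrite sum_nat_const card_setsT card_ord.
rewrite big_mkcond; apply: leq_sum => T _; case: ifP => // small_T.
apply: leq_trans (leq_trans (card_met_blocks_eq T) (leq_pexp2l _ small_T)) => //.
rewrite sum1dep_card; apply/subset_leq_card/fintype.subsetP => S.
by rewrite !inE => /andP[].
Qed.

End Blocks.

(* The bound on B is 8 * 2^n / 2^m, and m <= 2^(m-1). *)
Lemma leq_mul_exp2_subn (B n m : nat) :
  (B <= 2 ^ m.+1 * 2 ^ (n - 2 * m.-1))%N -> (2 * m.-1 <= n)%N ->
  (B * m <= 4 * 2 ^ n)%N.
Proof.
case: m => [|m] /=; first by move=> *; rewrite muln0.
move=> le_B /subnKC <-; set e := (n - 2 * m)%N in le_B *.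
have : (m < 2 ^ m)%N by apply: ltn_expl.
move: le_B; rewrite !expnS expnD mul2n -addnn !expnD expn0 muln1.
set x := (2 ^ m)%N; set y := (2 ^ e)%N; nia.
Qed.

Section BlockFamily.

Variables (R : realType) (eps : R) (n h : nat).
Hypotheses (h_gt0 : (0 < h)%N) (h_eps : 2 <= h%:R * eps).

Local Notation m := (nblocks n h.*2).

Lemma Bfam_double_met_blocks (S : {set 'I_n}) :
  S \in Bfam n h.*2 eps -> (h * #|met_blocks h S| + 2 * m.-1 <= n)%N.
Proof.
rewrite inE -card_met_blocks => le_B.
have hR : (0 : R) < h%:R by rewrite ltr0n.
have le_hB : h%:R * #|met_blocks h S|%:R <= n%:R * (1 - eps) :> R.
  have -> : n%:R * (1 - eps) = h%:R * ((2 * n)%:R / (h.*2)%:R * (1 - eps)) :> R.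
    by rewrite -muln2 !natrM; field; rewrite gt_eqF.
  by rewrite ler_pM2l.
have le_mh : (m.-1)%:R * h%:R <= n%:R :> R.
  by rewrite -natrM ler_nat nblocks_double_pred.
have eps_gt0 : 0 < eps.
  by rewrite -(pmulr_rgt0 _ hR); apply: lt_le_trans h_eps.
have le_m2 : 2 * (m.-1)%:R <= n%:R * eps :> R.
  have := ler_wpM2r (ltW eps_gt0) le_mh.
  have := ler_wpM2l (ler0n R m.-1) h_eps.
  lra.
rewrite -(ler_nat R) natrD !natrM; lra.
Qed.

Lemma card_Bfam_double :
  (#|Bfam n h.*2 eps| <= 2 ^ m.+1 * 2 ^ (n - 2 * m.-1))%N.
Proof.
apply: leq_trans (card_subsets_met_small n h_gt0 _); apply/subset_leq_card.
apply/fintype.subsetP => S /Bfam_double_met_blocks le_S; rewrite inE.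
by rewrite leq_subRL // (leq_trans _ le_S) ?leq_addl // addnC.
Qed.

Lemma card_Bfam_double_mulS : (#|Bfam n h.*2 eps| * n.+1 <= 8 * h * 2 ^ n)%N.
Proof.
have [->|[S /Bfam_double_met_blocks le_S]] := set_0Vmem (Bfam n h.*2 eps).
  by rewrite cards0.
have le_Bm := leq_mul_exp2_subn card_Bfam_double (leq_trans (leq_addl _ _) le_S).
have le_B : (#|Bfam n h.*2 eps| <= 2 ^ n)%N.
  by rewrite -[n in (2 ^ n)%N]card_ord -card_setsT max_card.
have := leq_nblocks_double n h_gt0; nia.
Qed.

End BlockFamily.

Local Open Scope classical_set_scope.

Theorem lemma3p2 (R : realType) (eps : R) :
  0 < eps -> eps < 1 ->
  exists k : nat, [/\ ~~ odd k, (0 < k)%N &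
    (fun n : nat => (#|Bfam n k eps|%:R / (2 ^ n)%:R : R)) @ \oo --> (0 : R)].
Proof.
move=> eps_gt0 _.
pose h := Num.Def.archi_bound (2 / eps).
have lt_h : 2 / eps < h%:R by apply/archi_boundP/ltW; rewrite divr_gt0.
have h_gt0 : (0 < h)%N.
  by rewrite -(ltr0n R); apply: le_lt_trans lt_h; rewrite divr_ge0 ?ltW.
have h_eps : 2 <= h%:R * eps by rewrite -ler_pdivrMr // ltW.
exists h.*2; split; [by rewrite odd_double | by rewrite double_gt0 |].
apply: (@squeeze_cvgr _ _ _ _ (fun=> 0) (fun n => (8 * h)%:R * harmonic n)).
- apply: nearW => n /=; rewrite divr_ge0 //= ler_pdivrMr ?ltr0n ?expn_gt0 //.
  rewrite mulrAC ler_pdivlMr ?ltr0n // -!natrM ler_nat.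
  exact: card_Bfam_double_mulS.
- exact: cvg_cst.
- by rewrite -(mulr0 (8 * h)%:R); apply: cvgMl_tmp; apply: cvg_harmonic.
Qed.
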